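(* Let $k\ge1$ and $\ell\ge1$. Then $$|\{n\in A_{2k}:\max\mathcal{CG}(n)=\max\mathcal{CG}_1(n)=F_{2k+2\ell}\}|=F_{2\ell+1},$$ $$|\{n\in A_{2k}:\max\mathcal{CG}(n)=\max\mathcal{CG}_2(n)=F_{2k+2\ell}\}|=F_{2\ell}.$$
   Context: Fibonacci numbers: $F_1=F_2=1$, $F_{n+1}=F_n+F_{n-1}$ for $n\ge2$. Chung–Graham decomposition: every positive integer $n$ has a unique representation $n=\sum_{i\ge1}c_iF_{2i}$ with $c_i\in\{0,1,2\}$, only finitely many nonzero, such that whenever $c_i=c_j=2$ with $i<j$ there is $k$ with $i<k<j$ and $c_k=0$. Let $\mathcal{CG}(n)$ be the set of $F_{2i}$ with $c_i\neq0$, $\mathcal{CG}_1(n)$ the set of $F_{2i}$ with $c_i=1$, and $\mathcal{CG}_2(n)$ the set of $F_{2i}$ with $c_i=2$. For $k\ge1$, $A_{2k}=\{n\ge1:\min\mathcal{CG}(n)=F_{2k}\}$. *)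

From mathcomp Require Import all_boot.
From Stdlib Require Import ClassicalEpsilon.
Set Implicit Arguments. Unset Strict Implicit. Unset Printing Implicit Defensive.

Fixpoint fib (n : nat) : nat :=
  match n with
  | 0 => 0
  | 1 => 1
  | (m.+1 as p).+1 => fib p + fib m
  end.

(* A coefficient list c encodes c_i = c`_(i-1), the coefficient of F_{2i}, i >= 1. *)
Definition cgval (c : seq nat) : nat :=
  \sum_(j < size c) nth 0 c j * fib (2 * j.+1).

(* Chung-Graham admissibility; no trailing zeros so that the list is canonical. *)
Definition cg_valid (c : seq nat) : Prop :=
  all (fun x => x <= 2) c /\ last 1 c != 0 /\
  (forall i j, i < j < size c -> nth 0 c i = 2 -> nth 0 c j = 2 ->
     exists k, i < k < j /\ nth 0 c k = 0).

(* The (unique, by Chung-Graham) decomposition of n. *)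
Definition cg_coeffs (n : nat) : seq nat :=
  epsilon (inhabits [::]) (fun c => cg_valid c /\ cgval c = n).

Definition CGsel (p : nat -> bool) (n : nat) : seq nat :=
  let c := cg_coeffs n in
  [seq fib (2 * j.+1) | j <- iota 0 (size c) & p (nth 0 c j)].
Definition CG := CGsel (fun x => x != 0).
Definition CG1 := CGsel (fun x => x == 1).
Definition CG2 := CGsel (fun x => x == 2).

Definition is_min (x : nat) (s : seq nat) : Prop := x \in s /\ all (fun y => x <= y) s.
Definition is_max (x : nat) (s : seq nat) : Prop := x \in s /\ all (fun y => y <= x) s.

Definition in_A (k n : nat) : Prop := 1 <= n /\ is_min (fib (2 * k)) (CG n).

Definition card_is (P : nat -> Prop) (m : nat) : Prop :=
  exists s : seq nat, uniq s /\ (forall n, n \in s <-> P n) /\ size s = m.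

From mathcomp Require Import all_boot zify.
From Stdlib Require Import ClassicalEpsilon.
Set Implicit Arguments. Unset Strict Implicit. Unset Printing Implicit Defensive.

(* Read from the largest index down, a Chung-Graham coefficient list is admissible
   exactly when a two-state automaton accepts it, the state recording whether a 2 may
   occur before the next 0.  An admissible word of length m is worth less than
   F_{2m+2} (less than F_{2m+1} from the restricted state), so the greedy algorithm
   gives every n exactly one admissible representation.  The integers counted are those
   represented by 0^{k-1} u t with |u| = l, u_1 <> 0 and top digit t; after reading t
   the automaton is free iff t = 1.  The numbers a_l, b_l of words of length l with
   nonzero last letter accepted from the free, resp. restricted, state satisfy
   a_1 = 2, b_1 = 1, a_{l+1} = 2 a_l + b_l, b_{l+1} = a_l + b_l, so a_l = F_{2l+1}
   and b_l = F_{2l}. *)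

Lemma mul2S n : 2 * n.+1 = (2 * n).+2.
Proof. by rewrite mulnS. Qed.

Lemma fibSS n : fib n.+2 = fib n.+1 + fib n. Proof. by []. Qed.

Lemma fib_gt0 n : 0 < fib n.+1.
Proof. by elim: n => // n IH; rewrite fibSS addn_gt0 IH. Qed.

Lemma leq_fib m n : m <= n -> fib m <= fib n.
Proof.
move/subnK <-; elim: (n - m) => // d IH; rewrite addSn.
by apply: leq_trans IH _; case: (d + m) => // j; rewrite fibSS leq_addr.
Qed.

Lemma ltn_fib m n : 1 < m -> m < n -> fib m < fib n.
Proof.
case: m => [|[|m]] // _ /leq_fib le_n; apply: leq_trans le_n.
by rewrite [fib m.+3]fibSS -addn1 leq_add2l fib_gt0.
Qed.

Lemma ltn_fibSS n : n < fib n.+2.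
Proof.
suff : n < fib n.+2 /\ n.+1 < fib n.+3 by case.
by elim: n => [|n [h1 h2]] //; split => //; rewrite [fib n.+4]fibSS; lia.
Qed.

Lemma leq_fib_even a b : (fib (2 * a.+1) <= fib (2 * b.+1)) = (a <= b).
Proof.
case: (leqP a b) => [le_ab|lt_ba].
  by apply: leq_fib; rewrite leq_mul2l ltnS.
apply/negbTE; rewrite -ltnNge; apply: ltn_fib; first by rewrite mulnS.
by rewrite ltn_mul2l ltnS.
Qed.

Lemma fib_even_inj : injective (fun a => fib (2 * a.+1)).
Proof.
move=> a b e; have {}e : fib (2 * a.+1) = fib (2 * b.+1) := e.
by apply/eqP; rewrite eqn_leq -[a <= b]leq_fib_even -[b <= a]leq_fib_even e leqnn.
Qed.

(* The letters of [r] are read from the largest index down; [free] says that no 2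
   has been read since the last 0, so that a 2 may come next. *)
Fixpoint admissible (free : bool) (r : seq nat) : bool :=
  if r is x :: r' then
    match x with
    | 0 => admissible true r'
    | 1 => admissible free r'
    | 2 => free && admissible false r'
    | _ => false
    end
  else true.

Definition twos_separated (c : seq nat) : Prop :=
  forall i j, i < j < size c -> nth 0 c i = 2 -> nth 0 c j = 2 ->
    exists k, i < k < j /\ nth 0 c k = 0.

Definition zero_before_twos (r : seq nat) : Prop :=
  forall j, j < size r -> nth 0 r j = 2 -> exists k, k < j /\ nth 0 r k = 0.

Lemma twos_separated_cons x r :
  twos_separated (x :: r) <-> twos_separated r /\ (x = 2 -> zero_before_twos r).
Proof.
split=> [sep|[sep zb] [|i] [|j] //= lt_ij xi xj].
- split=> [i j lt_ij ri rj|x2 j lt_j rj].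
  + have [[|k] [lt_k rk]] := sep i.+1 j.+1 lt_ij ri rj; first by [].
    by exists k.
  + have [[|k] [lt_k rk]] := sep 0 j.+1 lt_j x2 rj; first by [].
    by exists k.
- by have [k [lt_k rk]] := zb xi j lt_ij xj; exists k.+1.
- by have [k [lt_k rk]] := sep i j lt_ij xi xj; exists k.+1.
Qed.

Lemma zero_before_twos_cons x r :
  zero_before_twos (x :: r) <-> x = 0 \/ x != 2 /\ zero_before_twos r.
Proof.
split=> [zb|[-> [|j] //= _ _|[x_n2 zb] [|j] //= lt_j rj]].
- case: x zb => [|x] zb; [by left | right]; split.
  + by apply/eqP => x2; have [k [] //] := zb 0 isT x2.
  + move=> j lt_j rj; have [[|k] [lt_k rk]] := zb j.+1 lt_j rj; first by [].
    by exists k.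
- by exists 0.
- by rewrite rj in x_n2.
- by have [k [lt_k rk]] := zb j lt_j rj; exists k.+1.
Qed.

Lemma admissibleP s r : admissible s r <->
  all (fun x => x <= 2) r /\ twos_separated r /\ (~~ s -> zero_before_twos r).
Proof.
elim: r s => [|x r IH] s.
  by split=> // _; split=> //; split=> // i j /=; rewrite andbF.
have sep := twos_separated_cons x r; have zb := zero_before_twos_cons x r.
have true_holds : true by [].
case: x sep zb => [|[|[|x]]] /=; case: s; rewrite ?IH /=.
all: intuition (try done).
Qed.

Lemma twos_separated_rev c : twos_separated c -> twos_separated (rev c).
Proof.
move=> sep i j; rewrite size_rev => lt_ij; rewrite !nth_rev; try lia.
move=> ci cj; have [k [lt_k ck]] := sep (size c - j.+1) (size c - i.+1) ltac:(lia) cj ci.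
exists (size c - k.+1); split; first lia.
by rewrite nth_rev ?subnSK ?subKn //; lia.
Qed.

Lemma last_rev (T : Type) (x0 : T) s : last x0 (rev s) = head x0 s.
Proof. by case: s => // x s; rewrite rev_cons last_rcons. Qed.

Lemma cg_valid_rev r : cg_valid (rev r) <-> admissible true r /\ head 1 r != 0.
Proof.
rewrite /cg_valid last_rev all_rev admissibleP; split.
- by move=> [? [? sep]]; do !split => //; rewrite -[r]revK; apply: twos_separated_rev.
- by move=> [[? [sep _]] ?]; do !split => //; apply: twos_separated_rev.
Qed.

Lemma cgval_rcons c x : cgval (rcons c x) = cgval c + x * fib (2 * (size c).+1).
Proof.
rewrite /cgval size_rcons big_ord_recr /= nth_rcons ltnn eqxx; congr (_ + _).
by apply: eq_bigr => i _; rewrite nth_rcons ltn_ord.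
Qed.

Lemma cgval_rev_cons x r : cgval (rev (x :: r)) = x * fib (2 * (size r).+1) + cgval (rev r).
Proof. by rewrite rev_cons cgval_rcons size_rev addnC. Qed.

Lemma admissible_true r : admissible false r -> admissible true r.
Proof. by elim: r => // -[|[|[|x]]] r IH //= /IH. Qed.

Lemma admissible_tail s x r : admissible s (x :: r) -> x <= 2 /\ admissible (x != 2) r.
Proof.
case: x => [|[|[|x]]] //=; last by case/andP.
by case: s => // /admissible_true.
Qed.

Lemma cgval_rev_lt s r :
  admissible s r -> cgval (rev r) < fib (if s then (2 * size r).+2 else (2 * size r).+1).
Proof.
elim: r s => [|x r IH] s; first by rewrite /cgval big_ord0; case: s.
rewrite cgval_rev_cons !mul2S.
have fib4 : fib (2 * size r).+4 = fib (2 * size r).+3 + fib (2 * size r).+2 by [].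
have fib3 : fib (2 * size r).+3 = fib (2 * size r).+2 + fib (2 * size r).+1 by [].
case: x => [|[|[|x]]] adm //; rewrite /= in adm.
- by have := IH _ adm; case: s adm; lia.
- by have := IH _ adm; case: s adm; lia.
- by case: s adm => // adm; have := IH _ adm; lia.
Qed.

Lemma cgval_rev_lt_fib s r : admissible s r -> cgval (rev r) < fib (2 * size r).+2.
Proof. by move=> /cgval_rev_lt lt_r; apply: leq_trans lt_r _; apply: leq_fib; case: s. Qed.

Lemma cgval_rev_ge x r : 0 < x -> fib (2 * size r).+2 <= cgval (rev (x :: r)).
Proof. by rewrite cgval_rev_cons mul2S; case: x => // x _; rewrite mulSn -addnA leq_addr. Qed.

Lemma cgval_rev_inj s r1 r2 : size r1 = size r2 -> admissible s r1 -> admissible s r2 ->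
  cgval (rev r1) = cgval (rev r2) -> r1 = r2.
Proof.
elim: r1 s r2 => [|x1 r1 IH] s [|x2 r2] //= [size_eq] adm1 adm2.
have [x1_le2 {}adm1] := admissible_tail adm1; have [x2_le2 {}adm2] := admissible_tail adm2.
have lt1 := cgval_rev_lt_fib adm1; have lt2 := cgval_rev_lt_fib adm2.
rewrite !cgval_rev_cons -size_eq mul2S.
move: lt2; rewrite -size_eq; set F := fib _ in lt1 * => lt2 val_eq.
have x_eq : x1 = x2.
  clear adm1 adm2; case: x1 x1_le2 val_eq => [|[|[|?]]] //;
    by case: x2 x2_le2 => [|[|[|?]]] //; lia.
by subst x2; congr (_ :: _); apply: IH size_eq adm1 adm2 _; move/addnI: val_eq.
Qed.

Lemma cgval_rev_surj m s n : n < fib (if s then (2 * m).+2 else (2 * m).+1) ->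
  exists r, [/\ size r = m, admissible s r & cgval (rev r) = n].
Proof.
elim: m s n => [|m IH] s n.
  case: n => [_|n]; last by case: s.
  by exists [::]; split=> //; rewrite /cgval big_ord0.
rewrite mul2S; set F := fib (2 * m).+2 => lt_n.
have extend x s' : x * F <= n -> n - x * F < fib (if s' then (2 * m).+2 else (2 * m).+1) ->
    (forall r, admissible s' r -> admissible s (x :: r)) ->
    exists r, [/\ size r = m.+1, admissible s r & cgval (rev r) = n].
  move=> le_n lt_rem adm_ext; have [r [size_r adm_r val_r]] := IH s' _ lt_rem.
  exists (x :: r); split; [by rewrite /= size_r | exact: adm_ext |].
  by rewrite cgval_rev_cons size_r val_r mul2S subnKC.
have fib4 : fib (2 * m).+4 = F + F + fib (2 * m).+1 by rewrite /F /=; lia.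
have fib3 : fib (2 * m).+3 = F + fib (2 * m).+1 by [].
have [lt_F|ge_F] := ltnP n F.
  by apply: (extend 0 true); rewrite ?mul0n ?subn0.
case: s extend lt_n => extend; rewrite ?fib4 ?fib3 => lt_n.
- have [lt_2F|ge_2F] := ltnP n (F + F).
  + by apply: (extend 1 true) => //; lia.
  + by apply: (extend 2 false) => //; lia.
- by apply: (extend 1 false) => //; lia.
Qed.

Lemma admissible_head_nz r : admissible true r ->
  exists2 r', admissible true r' /\ head 1 r' != 0 & cgval (rev r') = cgval (rev r).
Proof.
elim: r => [|[|x] r IH] adm; first by exists [::].
  by have [r' ? val_r'] := IH adm; exists r'; rewrite // cgval_rev_cons val_r'.
by exists (x.+1 :: r).
Qed.

Lemma cg_exists n : exists c, cg_valid c /\ cgval c = n.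
Proof.
have lt_n : n < fib (if true then (2 * n).+2 else (2 * n).+1).
  by apply: leq_trans (ltn_fibSS n) _; apply: leq_fib; lia.
have [r [_ adm val_r]] := @cgval_rev_surj n true n lt_n.
have [r' valid_r' val_r'] := admissible_head_nz adm.
by exists (rev r'); split; [apply/cg_valid_rev | rewrite val_r'].
Qed.

Lemma cg_unique c1 c2 : cg_valid c1 -> cg_valid c2 -> cgval c1 = cgval c2 -> c1 = c2.
Proof.
rewrite -(revK c1) -(revK c2) !cg_valid_rev.
move: (rev c1) (rev c2) => r1 r2 [adm1 nz1] [adm2 nz2] val_eq.
suff size_eq : size r1 = size r2 by rewrite (cgval_rev_inj size_eq adm1 adm2 val_eq).
have shorter a b : admissible true a -> head 1 b != 0 -> size a < size b ->
    cgval (rev a) < cgval (rev b).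
  case: b => [|y b] adm_a y_nz lt_ab //; apply: leq_trans (cgval_rev_lt_fib adm_a) _.
  apply: leq_trans (cgval_rev_ge b _); last by rewrite lt0n.
  by apply: leq_fib; have : size a <= size b := lt_ab; lia.
case: (ltngtP (size r1) (size r2)) => [lt12|lt21|//].
- by have := shorter _ _ adm1 nz2 lt12; rewrite val_eq ltnn.
- by have := shorter _ _ adm2 nz1 lt21; rewrite val_eq ltnn.
Qed.

Lemma cg_coeffs_spec n : cg_valid (cg_coeffs n) /\ cgval (cg_coeffs n) = n.
Proof. exact: epsilon_spec (cg_exists n). Qed.

Lemma cg_coeffsK c : cg_valid c -> cg_coeffs (cgval c) = c.
Proof. by move=> valid_c; have [? ?] := cg_coeffs_spec (cgval c); apply: cg_unique. Qed.

Definition fibsel (p : pred nat) (c : seq nat) : seq nat :=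
  [seq fib (2 * j.+1) | j <- iota 0 (size c) & p (nth 0 c j)].

Lemma CGselE p n : CGsel p n = fibsel p (cg_coeffs n).
Proof. by []. Qed.

Lemma mem_fibsel p c i : (fib (2 * i.+1) \in fibsel p c) = (i < size c) && p (nth 0 c i).
Proof. by rewrite (mem_map fib_even_inj) mem_filter mem_iota andbC. Qed.

Lemma all_fibselP (p a : pred nat) c :
  reflect (forall j, j < size c -> p (nth 0 c j) -> a (fib (2 * j.+1))) (all a (fibsel p c)).
Proof.
rewrite all_map all_filter; apply: (iffP allP) => [a_sel j lt_j|a_sel j].
- have j_in : j \in iota 0 (size c) by rewrite mem_iota.
  by apply/implyP: (a_sel j j_in).
- by rewrite mem_iota => /andP[_ lt_j]; apply/implyP; apply: a_sel.
Qed.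

Lemma is_min_fibsel (p : pred nat) c i : is_min (fib (2 * i.+1)) (fibsel p c) <->
  [/\ i < size c, p (nth 0 c i) & forall j, j < i -> ~~ p (nth 0 c j)].
Proof.
rewrite /is_min mem_fibsel; split=> [[/andP[lt_i p_i] /all_fibselP ge_i]|[lt_i p_i lt_p]].
- split=> // j lt_ji; apply/negP => /(ge_i j (ltn_trans lt_ji lt_i)).
  by rewrite /= leq_fib_even leqNgt lt_ji.
- split; first by rewrite lt_i p_i.
  apply/all_fibselP => j _ p_j /=; rewrite leq_fib_even leqNgt.
  by apply/negP => /lt_p; rewrite p_j.
Qed.

Lemma is_max_fibsel (p : pred nat) c i : is_max (fib (2 * i.+1)) (fibsel p c) <->
  [/\ i < size c, p (nth 0 c i) & forall j, i < j < size c -> ~~ p (nth 0 c j)].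
Proof.
rewrite /is_max mem_fibsel; split=> [[/andP[lt_i p_i] /all_fibselP le_i]|[lt_i p_i gt_p]].
- split=> // j /andP[lt_ij lt_j]; apply/negP => /(le_i j lt_j).
  by rewrite /= leq_fib_even leqNgt lt_ij.
- split; first by rewrite lt_i p_i.
  apply/all_fibselP => j lt_j p_j /=; rewrite leq_fib_even leqNgt.
  by apply/negP => lt_ij; have := gt_p j; rewrite lt_ij lt_j p_j => /(_ isT).
Qed.

Lemma cg_extremesP i m t c : cg_valid c -> 0 < t ->
  is_min (fib (2 * i.+1)) (fibsel (fun x => x != 0) c) /\
  is_max (fib (2 * i.+1 + 2 * m.+1)) (fibsel (fun x => x != 0) c) /\
  is_max (fib (2 * i.+1 + 2 * m.+1)) (fibsel (fun x => x == t) c) <->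
  exists2 u, c = nseq i 0 ++ rcons u t & size u = m.+1 /\ nth 0 u 0 != 0.
Proof.
move=> [_ [last_nz _]] t_gt0.
have -> : 2 * i.+1 + 2 * m.+1 = 2 * (i + m.+1).+1 by lia.
rewrite is_min_fibsel !is_max_fibsel; split.
- move=> [[lt_i nz_i zero_below] [[lt_top _ zero_above] [_ /eqP top_t _]]].
  have size_c : size c = (i + m.+1).+1.
    have nz_last : nth 0 c (size c).-1 != 0.
      by rewrite nth_last; case: (c) lt_top last_nz.
    apply/eqP; rewrite eqn_leq lt_top andbT leqNgt; apply/negP => lt_size.
    have lt_last : i + m.+1 < (size c).-1 < size c by apply/andP; split; lia.
    by have := zero_above _ lt_last; rewrite nz_last.
  have size_drop_c : size (drop i c) = m.+2 by rewrite size_drop size_c; lia.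
  exists (take m.+1 (drop i c)); last by rewrite size_takel ?size_drop_c // nth_take // nth_drop addn0.
  rewrite -{1}(cat_take_drop i c); congr (_ ++ _); last first.
    by rewrite -{1}(take_size (drop i c)) size_drop_c (take_nth 0) ?size_drop_c // nth_drop top_t.
  have le_i : i <= size c := ltnW lt_i.
  apply: (@eq_from_nth _ 0) => [|j]; rewrite size_takel // ?size_nseq // => lt_j.
  by rewrite nth_take // nth_nseq lt_j; apply/eqP/negbNE/zero_below.
- move=> [u c_eq [size_u nz_u]].
  have size_c : size c = (i + m.+1).+1 by rewrite c_eq size_cat size_nseq size_rcons size_u addnS.
  have nth_c j : nth 0 c j =
      if j < i then 0 else if j - i < m.+1 then nth 0 u (j - i) else if j - i == m.+1 then t else 0.
    by rewrite c_eq nth_cat size_nseq nth_nseq nth_rcons size_u; case: ltnP.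
  have c_i : nth 0 c i = nth 0 u 0 by rewrite nth_c ltnn subnn.
  have c_top : nth 0 c (i + m.+1) = t by rewrite nth_c ltnNge leq_addr /= addKn ltnn eqxx.
  rewrite size_c c_i c_top eqxx nz_u -lt0n t_gt0 ltnS leq_addr leqnn.
  have no_above j : i + m.+1 < j < (i + m.+1).+1 -> false.
    by case/andP => lt_j; rewrite ltnS leqNgt lt_j.
  split; first by split=> // j lt_j; rewrite nth_c lt_j.
  by split; split=> // j /no_above.
Qed.

Lemma admissible_cat_zeros s w n : admissible s (w ++ nseq n 0) = admissible s w.
Proof.
elim: w s => [|x w IH] s /=; first by elim: n s => // n IHn s; apply: IHn.
by case: x => [|[|[|x]]] //; rewrite IH.
Qed.

Fixpoint words (m : nat) (free : bool) : seq (seq nat) :=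
  if m is m'.+1 then
    [seq 0 :: w | w <- words m' true] ++ [seq 1 :: w | w <- words m' free] ++
    (if free then [seq 2 :: w | w <- words m' false] else [::])
  else [:: 1] :: (if free then [:: [:: 2]] else [::]).

Lemma mem_map_cons (y x : nat) w (L : seq (seq nat)) :
  (x :: w \in [seq y :: v | v <- L]) = (x == y) && (w \in L).
Proof.
case: (eqVneq x y) => [->|ne_xy]; first by rewrite mem_map // => ? ? [].
by apply/mapP => -[v _ [x_eq _]]; rewrite x_eq eqxx in ne_xy.
Qed.

Lemma mem_words m s w :
  (w \in words m s) = [&& size w == m.+1, admissible s w & last 0 w != 0].
Proof.
elim: m s w => [|m IH] s [|x w].
- by case: s.
- by case: s; case: w => [|? ?]; rewrite ?inE //=; case: x => [|[|[|x]]].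
- by case: s; rewrite /= !mem_cat; apply/negP; do ![case/orP | case/mapP => ? ? //].
rewrite /= !mem_cat (mem_map_cons 0) (mem_map_cons 1) !IH.
have -> : (x :: w \in (if s then [seq 2 :: v | v <- words m false] else [::])) =
    s && (x == 2) && (w \in words m false) by case: s; rewrite ?(mem_map_cons 2).
rewrite IH; case: w => [|y w] /=; first by rewrite !andbF.
by case: s; case: x => [|[|[|x]]]; rewrite /= ?andbF ?orbF.
Qed.

Lemma uniq_words m s : uniq (words m s).
Proof.
elim: m s => [|m IH] s; first by case: s.
have cons_inj (y : nat) : injective (cons y) by move=> ? ? [].
have disjoint (y z : nat) (A B : seq (seq nat)) :
    y != z -> ~~ has (mem [seq y :: v | v <- A]) [seq z :: v | v <- B].
  move=> ne_yz; rewrite has_map; apply/hasPn => v _ /=.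
  by rewrite mem_map_cons eq_sym (negbTE ne_yz).
rewrite /=; case: s.
- by rewrite !cat_uniq !has_cat negb_or !map_inj_uniq // !IH !disjoint.
- by rewrite cats0 cat_uniq !map_inj_uniq // !IH disjoint.
Qed.

Lemma size_words m :
  size (words m true) = fib (2 * m.+1 + 1) /\ size (words m false) = fib (2 * m.+1).
Proof.
elim: m => [|m [IHt IHf]]; first by [].
rewrite [words m.+1 _]/= [words m.+1 _]/= !size_cat !size_map addn0.
rewrite !mul2S !addn1 in IHt IHf *; rewrite IHt IHf.
have fib5 : fib (2 * m).+4.+1 = fib (2 * m).+4 + fib (2 * m).+3 by [].
have fib4 : fib (2 * m).+4 = fib (2 * m).+3 + fib (2 * m).+2 by [].
by split; lia.
Qed.

Lemma card_CG_extremes i m t : 0 < t <= 2 ->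
  card_is (fun n => in_A i.+1 n /\ is_max (fib (2 * i.+1 + 2 * m.+1)) (CG n)
                     /\ is_max (fib (2 * i.+1 + 2 * m.+1)) (CGsel (fun x => x == t) n))
          (size (words m (t == 1))).
Proof.
move=> /andP[t_gt0 t_le2]; pose shape w := nseq i 0 ++ rcons (rev w) t.
have valid_shape w : cg_valid (shape w) <-> admissible (t == 1) w.
  rewrite -[shape w]revK cg_valid_rev /shape rev_cat rev_rcons revK rev_nseq.
  by case: t t_gt0 t_le2 {shape} => [|[|[|?]]] //= _ _; rewrite admissible_cat_zeros; split=> [[]|].
exists [seq cgval (shape w) | w <- words m (t == 1)]; split; last split; last by rewrite size_map.
- rewrite map_inj_in_uniq ?uniq_words // => w1 w2.
  rewrite !mem_words => /and3P[_ /valid_shape valid1 _] /and3P[_ /valid_shape valid2 _].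
  move/(cg_unique valid1 valid2)/eqP.
  by rewrite eqseq_cat // eqseq_rcons (can_eq revK) !eqxx andbT => /eqP.
- move=> n; split.
  + move=> /mapP[w]; rewrite mem_words => /and3P[/eqP size_w /valid_shape valid_w last_w] ->.
    rewrite /in_A /CG !CGselE cg_coeffsK //.
    have [|min_w max_w] := (cg_extremesP i m valid_w t_gt0).2.
      by exists (rev w); rewrite // size_rev size_w nth0 -last_rev revK.
    do !split => //; rewrite -[shape w]revK /shape rev_cat rev_rcons.
    by apply: leq_trans (cgval_rev_ge _ t_gt0); apply: fib_gt0.
  + move=> [[_ min_n] max_n]; have [valid_c val_c] := cg_coeffs_spec n.
    rewrite /CG !CGselE in min_n max_n.
    have [u c_eq [size_u nz_u]] := (cg_extremesP i m valid_c t_gt0).1 (conj min_n max_n).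
    apply/mapP; exists (rev u); last by rewrite /shape revK -c_eq val_c.
    rewrite mem_words size_rev size_u eqxx last_rev -nth0 nz_u andbT /=.
    by apply/valid_shape; rewrite /shape revK -c_eq.
Qed.

Theorem corollary3p4 (k l : nat) (hk : 1 <= k) (hl : 1 <= l) :
  card_is (fun n => in_A k n /\ is_max (fib (2 * k + 2 * l)) (CG n)
                     /\ is_max (fib (2 * k + 2 * l)) (CG1 n))
          (fib (2 * l + 1))
  /\
  card_is (fun n => in_A k n /\ is_max (fib (2 * k + 2 * l)) (CG n)
                     /\ is_max (fib (2 * k + 2 * l)) (CG2 n))
          (fib (2 * l)).
Proof.
case: k hk => // i _; case: l hl => // m _.
have [<- <-] := size_words m.
by split; [apply: (card_CG_extremes i m (t := 1)) | apply: (card_CG_extremes i m (t := 2))].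
Qed.
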